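(* Fix an integer $k\ge 2$ (the alphabet size). Say that $[a,b]_n$ is realizable over the $k$-letter alphabet if there is a marking of the $n$-dimensional $k$-ary hypercube in which every vertex is marked exactly $a$ times or exactly $b$ times. Then: (a) if $[a,b]_n$ is realizable, then $[a+1,b+1]_{n+k}$ is realizable; (b) if $[a,b]_n$ is realizable, then $[\ell a,\ell b]_{\ell n}$ is realizable for every positive integer $\ell$.
   Context: The $n$-dimensional $k$-ary hypercube has vertex set $\{0,1,\dots,k-1\}^n$. Its ''edges'' (lines) are the $nk^{n-1}$ sets of $k$ vertices obtained by fixing all coordinates except one coordinate $i$ and letting coordinate $i$ range over all $k$ values. A marking chooses, for each line, one vertex of that line; the number of times a vertex is marked is the number of lines for which it is the chosen vertex. (For $k=2$ this is an orientation of the $n$-cube, marking the head of each edge, and the mark count is the in-degree.) *)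

From mathcomp Require Import all_boot.
Set Implicit Arguments. Unset Strict Implicit. Unset Printing Implicit Defensive.

Definition vertex (k n : nat) := {ffun 'I_n -> 'I_k}.

Definition line_through (k n : nat) (i : 'I_n) (x : vertex k n) : {set vertex k n} :=
  [set y : vertex k n | [forall j : 'I_n, (j != i) ==> (y j == x j)]].

Definition is_line (k n : nat) (L : {set vertex k n}) : bool :=
  [exists i : 'I_n, exists x : vertex k n, L == line_through i x].

Definition is_marking (k n : nat) (mk : {set vertex k n} -> vertex k n) : Prop :=
  forall L : {set vertex k n}, is_line L -> mk L \in L.

Definition mark_count (k n : nat) (mk : {set vertex k n} -> vertex k n)
  (v : vertex k n) : nat :=
  #|[set L : {set vertex k n} | is_line L && (mk L == v)]|.

Definition realizable (k n a b : nat) : Prop :=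
  exists mk : {set vertex k n} -> vertex k n,
    is_marking mk /\ forall v : vertex k n, mark_count mk v = a \/ mark_count mk v = b.

From mathcomp Require Import all_boot all_algebra.
Set Implicit Arguments. Unset Strict Implicit. Unset Printing Implicit Defensive.
Import GRing.Theory.

(* A marking amounts to choosing, for each direction i and each vertex x, the
   i-th coordinate of the marked vertex on the line through x in direction i,
   as a function of the line only; v is then marked once for every direction i
   in which its own coordinate is the chosen one.  (a) glues a realization of
   [a,b]_n with the k-cube in which the marked coordinate in direction j is
   j minus the sum of the other coordinates mod k, so that every vertex is
   marked exactly once (in direction sum of its coordinates).  (b) replaces
   each direction i of [a,b]_n by l copies and marks a vertex v of the large
   cube through the projection summing the l copies mod k: the copy (t,i) of v
   is marked iff direction i of the projection of v is. *)

Section Lines.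
Variables k n : nat.
Implicit Types (i j : 'I_n) (x y v : vertex k n).

Lemma line_through_id i x : x \in line_through i x.
Proof. by rewrite inE; apply/forallP => j; apply/implyP. Qed.

Lemma line_throughP i x y :
  reflect (forall j, j != i -> y j = x j) (y \in line_through i x).
Proof.
rewrite inE; apply: (iffP forallP) => [H j /(implyP (H j))/eqP // | H j].
by apply/implyP => /H ->.
Qed.

Lemma line_through_eq i x y :
  y \in line_through i x -> line_through i y = line_through i x.
Proof.
move=> /line_throughP yx; apply/setP => z.
apply/line_throughP/line_throughP => zl j ji; by rewrite zl // yx.
Qed.

Lemma line_through_is_line i x : is_line (line_through i x).
Proof. by apply/existsP; exists i; apply/existsP; exists x. Qed.

Definition set_coord x i (t : 'I_k) : vertex k n :=
  [ffun j => if j == i then t else x j].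

Lemma set_coord_line x i t : set_coord x i t \in line_through i x.
Proof. by apply/line_throughP => j ji; rewrite ffunE (negPf ji). Qed.

Lemma line_through_eqE i x y :
  y \in line_through i x -> (y == x) = (y i == x i).
Proof.
move=> /line_throughP yx; apply/eqP/eqP => [-> // | yxi].
by apply/ffunP => j; case: (eqVneq j i) => [-> | /yx].
Qed.

Hypothesis k_gt1 : 1 < k.

Lemma line_through_dir i j x y : line_through i x = line_through j y -> i = j.
Proof.
move=> E; apply/eqP/negPn/negP => ij.
have [t txi] : exists t : 'I_k, t != x i.
  have k_gt0 : 0 < k by exact: ltnW.
  case: (eqVneq (x i) (Ordinal k_gt0)) => [-> | ?]; last first.
    by exists (Ordinal k_gt0); rewrite eq_sym.
  by exists (Ordinal k_gt1).
have /line_throughP/(_ i ij) : x \in line_through j y.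
  by rewrite -E line_through_id.
have /line_throughP/(_ i ij) : set_coord x i t \in line_through j y.
  by rewrite -E set_coord_line.
by rewrite ffunE eqxx => ty xy; rewrite ty -xy eqxx in txi.
Qed.

Lemma mark_count_dirs mk v : is_marking mk ->
  mark_count mk v = #|[set i | mk (line_through i v) == v]|.
Proof.
move=> mk_marking; rewrite /mark_count.
suff -> : [set L | is_line L && (mk L == v)] =
          (fun i => line_through i v) @: [set i | mk (line_through i v) == v].
  by rewrite card_imset // => i j; apply: line_through_dir.
apply/setP => L; rewrite inE; apply/andP/imsetP => [[L_line /eqP mkL] | [i]].
  have := mk_marking L L_line; rewrite mkL.
  case/existsP: L_line mkL => i /existsP[x /eqP ->] mkL vL.
  exists i; last by rewrite (line_through_eq vL).
  by rewrite inE (line_through_eq vL) mkL.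
by rewrite inE => /eqP mkv ->; rewrite line_through_is_line mkv.
Qed.

End Lines.

Definition line_invariant k n (c : 'I_n -> vertex k n -> 'I_k) : Prop :=
  forall i x y, y \in line_through i x -> c i y = c i x.

Definition choice_count k n (c : 'I_n -> vertex k n -> 'I_k) (v : vertex k n) :=
  #|[set i | v i == c i v]|.

Definition choice_realizable k n a b : Prop :=
  exists2 c : 'I_n -> vertex k n -> 'I_k, line_invariant c &
    forall v, choice_count c v = a \/ choice_count c v = b.

Lemma realizable_choiceE k n a b :
  1 < k -> realizable k n a b <-> choice_realizable k n a b.
Proof.
move=> k_gt1; split.
  case=> mk [mk_marking mk_ab].
  exists (fun i x => mk (line_through i x) i) => [i x y /line_through_eq -> //|v].
  rewrite /choice_count (_ : [set i | _] = [set i | mk (line_through i v) == v]).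
    by rewrite -mark_count_dirs.
  apply/setP => i; rewrite !inE eq_sym.
  by rewrite (line_through_eqE (mk_marking _ (line_through_is_line i v))).
case=> c c_inv c_ab.
pose v0 : vertex k n := [ffun => Ordinal (ltnW k_gt1)].
pose mk (L : {set vertex k n}) :=
  if [pick p : 'I_n * vertex k n | L == line_through p.1 p.2] is Some (i, x)
  then set_coord x i (c i x) else v0.
have mkE i x : exists2 y, line_through i x = line_through i y &
                          mk (line_through i x) = set_coord y i (c i y).
  rewrite /mk; case: pickP => [[j y] /eqP E | /(_ (i, x))]; last by rewrite eqxx.
  by rewrite /= in E; have ij := line_through_dir k_gt1 E; subst j; exists y.
have mk_marking : is_marking mk.
  move=> L /existsP[i /existsP[x /eqP ->]].
  by have [y -> ->] := mkE i x; apply: set_coord_line.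
exists mk; split => // v; rewrite mark_count_dirs //.
rewrite (_ : [set i | _] = [set i | v i == c i v]); first exact: c_ab.
apply/setP => i; rewrite !inE; have [y E ->] := mkE i v.
have vy : v \in line_through i y by rewrite -E line_through_id.
rewrite (line_through_eqE (_ : _ \in line_through i v)) ?E ?set_coord_line //.
by rewrite ffunE eqxx (c_inv _ _ _ vy) eq_sym.
Qed.

Lemma split_lshift m n (i : 'I_m) : split (lshift n i) = inl i.
Proof. exact: (unsplitK (inl i)). Qed.

Lemma split_rshift m n (i : 'I_n) : split (rshift m i) = inr i.
Proof. exact: (unsplitK (inr i)). Qed.

Section Restriction.
Variables (k m n : nat) (f : 'I_m -> 'I_n).

Definition restr_vertex (v : vertex k n) : vertex k m := [ffun j => v (f j)].

Lemma restr_line_through i x y : injective f ->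
  y \in line_through (f i) x ->
  restr_vertex y \in line_through i (restr_vertex x).
Proof.
move=> f_inj /line_throughP yx; apply/line_throughP => j ji.
by rewrite !ffunE yx // (inj_eq f_inj).
Qed.

End Restriction.

Section Concatenation.
Variables (k n m : nat).
Variables (c1 : 'I_n -> vertex k n -> 'I_k) (c2 : 'I_m -> vertex k m -> 'I_k).

Definition cat_choice (i : 'I_(n + m)) (v : vertex k (n + m)) : 'I_k :=
  match split i with
  | inl i1 => c1 i1 (restr_vertex (lshift m) v)
  | inr i2 => c2 i2 (restr_vertex (@rshift n m) v)
  end.

Lemma cat_choice_invariant :
  line_invariant c1 -> line_invariant c2 -> line_invariant cat_choice.
Proof.
move=> c1_inv c2_inv i x y; rewrite /cat_choice -(splitK i).
case: (split i) => [i1 | i2] yx; rewrite unsplitK.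
  by apply/c1_inv/restr_line_through => //; apply: lshift_inj.
by apply/c2_inv/restr_line_through => //; apply: rshift_inj.
Qed.

Lemma choice_count_cat v : choice_count cat_choice v =
  choice_count c1 (restr_vertex (lshift m) v) +
  choice_count c2 (restr_vertex (@rshift n m) v).
Proof.
rewrite /choice_count -!sum1dep_card big_split_ord /=.
by congr (_ + _); apply: eq_bigl => i;
  rewrite /cat_choice ?split_lshift ?split_rshift ffunE.
Qed.

End Concatenation.

Lemma choice_realizable_cat k n m a b c :
  choice_realizable k n a b -> choice_realizable k m c c ->
  choice_realizable k (n + m) (a + c) (b + c).
Proof.
case=> c1 c1_inv c1_ab [c2 c2_inv c2_c].
exists (cat_choice c1 c2) => [|v]; first exact: cat_choice_invariant.
have c2v : choice_count c2 (restr_vertex (@rshift n m) v) = c.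
  by case: (c2_c (restr_vertex (@rshift n m) v)).
rewrite choice_count_cat c2v.
by case: (c1_ab (restr_vertex (lshift m) v)) => ->; [left | right].
Qed.

Section SumMarking.
Variable k : nat.
Local Open Scope ring_scope.

Definition sum_choice (j : 'I_k.+1) (v : vertex k.+1 k.+1) : 'I_k.+1 :=
  j - \sum_(m | m != j) v m.

Lemma sum_choice_invariant : line_invariant sum_choice.
Proof.
move=> j x y /line_throughP yx; congr (_ - _).
by apply: eq_bigr => m; apply: yx.
Qed.

Lemma choice_count_sum v : choice_count sum_choice v = 1%N.
Proof.
rewrite /choice_count -(cards1 (\sum_m v m)); apply: eq_card => j.
by rewrite !inE eq_sym subr_eq [in RHS](bigD1 j) //= addrC.
Qed.

Lemma choice_realizable_sum : choice_realizable k.+1 k.+1 1 1.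
Proof.
exists sum_choice => [|v]; first exact: sum_choice_invariant.
by left; apply: choice_count_sum.
Qed.

End SumMarking.

Section BlowUp.
Variables k l n : nat.
Local Open Scope ring_scope.

Definition mxvec_pair (I : 'I_(l * n)) : 'I_l * 'I_n :=
  enum_val (cast_ord (esym (mxvec_cast l n)) I).

Lemma mxvec_indexK t i : mxvec_pair (mxvec_index t i) = (t, i).
Proof. by rewrite /mxvec_pair cast_ordK enum_rankK. Qed.

Lemma eq_mxvec_index (t s : 'I_l) (i j : 'I_n) :
  (mxvec_index t i == mxvec_index s j) = ((t, i) == (s, j)).
Proof.
apply/eqP/eqP => [E | [-> ->] //].
by rewrite -mxvec_indexK E mxvec_indexK.
Qed.

Definition fold_vertex (v : vertex k.+1 (l * n)) : vertex k.+1 n :=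
  [ffun i => \sum_t v (mxvec_index t i)].

Lemma fold_line_through t i x y : y \in line_through (mxvec_index t i) x ->
  fold_vertex y \in line_through i (fold_vertex x).
Proof.
move=> /line_throughP yx; apply/line_throughP => j ji; rewrite !ffunE.
apply: eq_bigr => s _; apply: yx.
by rewrite eq_mxvec_index xpair_eqE (negPf ji) andbF.
Qed.

Variable c : 'I_n -> vertex k.+1 n -> 'I_k.+1.

Definition blow_choice (I : 'I_(l * n)) (v : vertex k.+1 (l * n)) : 'I_k.+1 :=
  let: (t, i) := mxvec_pair I in
  c i (fold_vertex v) - \sum_(s | s != t) v (mxvec_index s i).

Lemma blow_choice_invariant : line_invariant c -> line_invariant blow_choice.
Proof.
move=> c_inv I x y; case/mxvec_indexP: I => t i yx.
rewrite /blow_choice mxvec_indexK (c_inv _ _ _ (fold_line_through yx)).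
congr (_ - _); apply: eq_bigr => s st; move/line_throughP: yx; apply.
by rewrite eq_mxvec_index xpair_eqE eqxx andbT.
Qed.

Lemma blow_choice_eqE t i (v : vertex k.+1 (l * n)) :
  (v (mxvec_index t i) == blow_choice (mxvec_index t i) v) =
  (fold_vertex v i == c i (fold_vertex v)).
Proof.
rewrite /blow_choice mxvec_indexK eq_sym subr_eq eq_sym ffunE.
by rewrite [in RHS](bigD1 t) //= addrC.
Qed.

Lemma choice_count_blow (v : vertex k.+1 (l * n)) :
  choice_count blow_choice v = (l * choice_count c (fold_vertex v))%N.
Proof.
rewrite /choice_count; set P := [set i | fold_vertex v i == c i (fold_vertex v)].
have -> : [set I | v I == blow_choice I v] =
          [set mxvec_index p.1 p.2 | p in setX setT P].
  apply/setP => I; case/mxvec_indexP: I => t i; rewrite inE blow_choice_eqE.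
  apply/idP/imsetP => [vi | [[s j] /setXP[_]]].
    by exists (t, i); rewrite ?inE.
  by rewrite inE => vj /= /eqP; rewrite eq_mxvec_index => /eqP[_ ->].
rewrite card_imset ?cardsX ?cardsT ?card_ord // => p q /eqP.
by rewrite eq_mxvec_index -!surjective_pairing => /eqP.
Qed.

End BlowUp.

Lemma choice_realizable_blow k n a b l :
  choice_realizable k.+1 n a b -> choice_realizable k.+1 (l * n) (l * a) (l * b).
Proof.
case=> c c_inv c_ab; exists (blow_choice c) => [|v].
  exact: blow_choice_invariant.
by rewrite choice_count_blow; case: (c_ab (fold_vertex v)) => ->; [left | right].
Qed.

Theorem theorem5 (k : nat) (hk : 2 <= k) :
  (forall n a b : nat, realizable k n a b -> realizable k (n + k) a.+1 b.+1) /\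
  (forall n a b : nat, realizable k n a b ->
     forall l : nat, 0 < l -> realizable k (l * n) (l * a) (l * b)).
Proof.
case: k hk => [|[|k]] // k_gt1.
have choiceE n a b := realizable_choiceE n a b k_gt1.
split => [n a b /choiceE r | n a b /choiceE r l _]; apply/choiceE.
  rewrite -[a.+1]addn1 -[b.+1]addn1.
  exact: choice_realizable_cat r (choice_realizable_sum k.+1).
exact: choice_realizable_blow.
Qed.
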